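(* Let $\mathbb{F}$ be a field of characteristic $2$ with at least $4$ elements, and let $B\in M_4(\mathbb{F})$ be a non-derogative matrix. (a) If $\operatorname{Trace}(B)=u_3\neq 0$, then for every $a\in\mathbb{F}$ with $a\neq 0$ and $a\neq u_3$, there exist $N,D\in M_4(\mathbb{F})$ with $B=N+D$, $N^2=0$, and $D$ diagonalizable with every eigenvalue in $\{0,\ a,\ u_3+a\}$. (b) If $\operatorname{Trace}(B)=0$, then for every $a\in\mathbb{F}$ with $a\neq 0,1$, there exist $N,D\in M_4(\mathbb{F})$ with $B=N+D$, $N^2=0$, and $D$ diagonalizable with eigenvalues $0,1,a,a+1$.
   Context: A square matrix is non-derogative if its minimal polynomial equals its characteristic polynomial. A matrix $D\in M_n(\mathbb{F})$ is diagonalizable if there exists an invertible $U\in M_n(\mathbb{F})$ such that $U^{-1}DU$ is diagonal. *)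

From mathcomp Require Import all_boot all_order all_algebra.
Set Implicit Arguments. Unset Strict Implicit. Unset Printing Implicit Defensive.
Import GRing.Theory.
Local Open Scope ring_scope.

Definition non_derogative (F : fieldType) (n : nat) (A : 'M[F]_n.+1) : Prop :=
  mxminpoly A = char_poly A.

From mathcomp Require Import all_boot all_order all_algebra.
From Stdlib Require Import Classical.
From mathcomp Require Import zify ring.
Set Implicit Arguments. Unset Strict Implicit. Unset Printing Implicit Defensive.
Import GRing.Theory.
Local Open Scope ring_scope.

(* A non-derogative matrix has a cyclic vector v: the Krylov matrix with rows
   v, vB, vB^2, vB^3 is invertible, hence B is similar to the companion matrix
   C of its characteristic polynomial, whose trace is that of B.  The companion
   matrix splits explicitly as C = N + D with N^2 = 0 and D annihilated by a
   product of distinct linear factors, so D is diagonalizable with eigenvalues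
   among the corresponding roots; conjugating back transports the splitting
   to B.  The cyclic vector is obtained by enlarging the local minimal
   polynomial of a vector until it reaches the minimal polynomial of B. *)

Section IrreducibleFactors.
Variable F : fieldType.
Implicit Types p q h : {poly F}.

Lemma irredp_dvdp_exists p : (1 < size p)%N -> exists2 q, irreducible_poly q & q %| p.
Proof.
have [s] := ubnP (size p); elim: s p => // s IH p sp p1.
have [irr_p | red_p] := classic (irreducible_poly p); first by exists p.
have [q [sq1 qp not_qp]] : exists q, [/\ size q != 1%N, q %| p & ~~ (q %= p)].
  apply: NNPP => no_q; apply: red_p; split => // q sq1 qp.
  by apply: NNPP => not_qp; apply: no_q; exists q; split => //; apply/negP.
have p0 : p != 0 by rewrite -size_poly_gt0 ltnW.
have q0 : q != 0 by apply: contraTneq qp => ->; rewrite dvd0p.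
have sqp : (size q < size p)%N.
  rewrite ltn_neqAle dvdp_leq // andbT.
  by apply: contraNneq not_qp => /eqP; rewrite dvdp_size_eqp.
have q1 : (1 < size q)%N by rewrite ltn_neqAle eq_sym sq1 size_poly_gt0.
have [r irr_r rq] := IH q (leq_trans sqp sp) q1.
by exists r => //; apply: dvdp_trans rq qp.
Qed.

Lemma dvdp_max_exp q f : (1 < size q)%N -> f != 0 ->
  exists r f1, f = q ^+ r * f1 /\ ~~ (q %| f1).
Proof.
move=> q1; have [s] := ubnP (size f); elim: s f => // s IH f sf f0.
have [qf | nqf] := boolP (q %| f); last by exists 0%N, f; rewrite mul1r.
have q0 : q != 0 by rewrite -size_poly_gt0 ltnW.
have f_q0 : f %/ q != 0 by apply: contraNneq f0 => e; rewrite -(divpK qf) e mul0r.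
have sfq : (size (f %/ q)%R < s)%N.
  have : (0 < size f)%N by rewrite size_poly_gt0.
  by rewrite size_divp //; move: sf q1; move: (size f) (size q) => m k; lia.
have [r [f1 [ef nqf1]]] := IH _ sfq f_q0.
by exists r.+1, f1; split => //; rewrite -(divpK qf) ef exprS; ring.
Qed.

Lemma irredp_dvdp_exp q h m : irreducible_poly q ->
  h %| q ^+ m.+1 -> ~~ (h %| q ^+ m) -> h %= q ^+ m.+1.
Proof.
move=> irr_q; have q0 := irredp_neq0 irr_q.
suff qh : h %| q ^+ m.+1 -> ~~ (h %| q ^+ m) -> q ^+ m.+1 %| h.
  by move=> hq nh; rewrite /eqp hq qh.
elim: m h => [|m IH] h hq nh.
  rewrite expr0 dvdp1 in nh; rewrite expr1 in hq.
  by rewrite expr1 (eqp_dvdr _ (irr_q.2 _ nh hq)).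
have [qh | nqh] := boolP (q %| h); last first.
  have coprime_hq : coprimep h q by rewrite coprimep_sym irreducible_poly_coprime.
  by move: hq; rewrite exprS Gauss_dvdpr // (negbTE nh).
rewrite -(divpK qh) exprSr dvdp_mul2r // IH //.
  by rewrite -(dvdp_mul2r _ _ q0) divpK // -exprSr.
by apply: contra nh => H; rewrite -(divpK qh) exprSr dvdp_mul2r.
Qed.

End IrreducibleFactors.

Section CyclicVector.
Variables (F : fieldType) (n : nat) (A : 'M[F]_n.+1).
Implicit Types (v w : 'rV[F]_n.+1) (p q f g h : {poly F}).
Local Notation mxact v p := (v *m horner_mx A p).

Lemma mxactM v p q : mxact (mxact v p) q = mxact v (p * q).
Proof. by rewrite rmorphM mulmxA. Qed.

Lemma mxact_dvdp v p q : mxact v p = 0 -> p %| q -> mxact v q = 0.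
Proof. by move=> vp /divpK <-; rewrite mulrC -mxactM vp mul0mx. Qed.

Definition local_minpoly v f := forall p, (mxact v p == 0) = (f %| p).

Lemma local_minpoly_neq0 v f : local_minpoly v f -> f != 0.
Proof.
move=> vf; apply: contraTneq (monic_neq0 (mxminpoly_monic A)) => f0.
by rewrite negbK -dvd0p -f0 -vf mx_root_minpoly mulmx0.
Qed.

Lemma local_minpoly_exists v : exists f, local_minpoly v f.
Proof.
suff gen : forall s p, (size p <= s)%N -> p != 0 -> mxact v p = 0 ->
    exists f, local_minpoly v f.
  apply: (gen _ _ (leqnn _)); first exact: monic_neq0 (mxminpoly_monic A).
  by rewrite mx_root_minpoly mulmx0.
elim=> [|s IH] p sp p0 vp; first by move: sp p0; rewrite leqn0 size_poly_eq0 => ->.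
have [gen_p | ] := classic (forall q, mxact v q = 0 -> p %| q).
  by exists p => q; apply/eqP/idP => [/gen_p // | ]; apply: mxact_dvdp.
case/not_all_ex_not => q no_q; have [vq not_pq] := imply_to_and _ _ no_q.
apply: (IH (q %% p)); first by rewrite -ltnS (leq_trans _ sp) // ltn_modp.
  by apply/eqP => /modp_eq0P.
have -> : q %% p = q - q %/ p * p by rewrite {2}(divp_eq q p) addrC addKr.
by rewrite rmorphB mulmxBr vq mulrC -mxactM vp mul0mx subr0.
Qed.

Lemma local_minpoly_mul v p g : local_minpoly v (p * g) -> local_minpoly (mxact v p) g.
Proof.
move=> vpg q; rewrite mxactM vpg dvdp_mul2l //.
by apply: contraTneq (local_minpoly_neq0 vpg) => ->; rewrite mul0r negbK.
Qed.

Lemma local_minpoly_add v w f g : local_minpoly v f -> local_minpoly w g ->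
  coprimep f g -> local_minpoly (v + w) (f * g).
Proof.
move=> vf wg cfg p; have vf0 : mxact v f = 0 by apply/eqP; rewrite vf.
have wg0 : mxact w g = 0 by apply/eqP; rewrite wg.
rewrite Gauss_dvdp // mulmxDl; apply/idP/andP => [/eqP vwp | [fp gp]]; last first.
  by rewrite (mxact_dvdp vf0 fp) (mxact_dvdp wg0 gp) addr0.
have vp : mxact v p = - mxact w p by apply/eqP; rewrite -addr_eq0 vwp.
have wp : mxact w p = - mxact v p by apply/eqP; rewrite -addr_eq0 addrC vwp.
have cgf : coprimep g f by rewrite coprimep_sym.
rewrite -(Gauss_dvdpl _ cfg) -(Gauss_dvdpl _ cgf) -vf -wg.
split; rewrite -mxactM; [rewrite vp | rewrite wp];
  by rewrite mulNmx mxactM mulrC -mxactM ?vf0 ?wg0 mul0mx oppr0.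
Qed.

Lemma local_minpoly_irredp_exp v h q r : irreducible_poly q ->
  local_minpoly v h -> local_minpoly (mxact v (q ^+ r)) q -> h %= q ^+ r.+1.
Proof.
move=> irr_q vh vqr; apply: irredp_dvdp_exp => //; rewrite -vh.
  by rewrite exprSr -mxactM vqr dvdpp.
by rewrite -[q ^+ r]mulr1 -mxactM vqr dvdp1 (gtn_eqF irr_q.1).
Qed.

(* With q an irreducible factor of the local minimal polynomial of w f(A) and
   f = q^r f1, q coprime to f1, the vectors v q^r(A) and u below have coprime
   local minimal polynomials f1 and (up to a unit) q^(r+1). *)
Lemma local_minpoly_grow v w f : local_minpoly v f -> mxact w f != 0 ->
  exists z g, local_minpoly z g /\ (size f < size g)%N.
Proof.
move=> vf wf; have f0 := local_minpoly_neq0 vf.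
have [g0 wg0] := local_minpoly_exists (mxact w f).
have g0_gt1 : (1 < size g0)%N.
  rewrite ltn_neqAle size_poly_gt0 (local_minpoly_neq0 wg0) andbT eq_sym.
  by rewrite -dvdp1 -wg0 rmorph1 mulmx1.
have [q irr_q qg0] := irredp_dvdp_exists g0_gt1; have q0 := irredp_neq0 irr_q.
have [r [f1 [ef nqf1]]] := dvdp_max_exp irr_q.1 f0.
have f1_0 : f1 != 0 by apply: contraNneq f0 => f1_0; rewrite ef f1_0 mulr0.
pose u := mxact w (f1 * (g0 %/ q)).
have uq : local_minpoly (mxact u (q ^+ r)) q.
  rewrite /u !mxactM (_ : _ * q ^+ r = f * (g0 %/ q)); last by rewrite ef; ring.
  by rewrite -mxactM; apply: local_minpoly_mul; rewrite divpK.
have [h uh] := local_minpoly_exists u.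
have h_eqp := local_minpoly_irredp_exp irr_q uh uq.
have vqr : local_minpoly (mxact v (q ^+ r)) f1 by apply: local_minpoly_mul; rewrite -ef.
have cf1h : coprimep f1 h.
  by rewrite (eqp_coprimepr _ h_eqp) coprimep_sym coprimep_expl // irreducible_poly_coprime.
exists (mxact v (q ^+ r) + u), (f1 * h); split; first exact: local_minpoly_add.
rewrite ef (size_mul f1_0 (local_minpoly_neq0 uh)) (eqp_size h_eqp) exprSr.
rewrite !size_mul ?expf_neq0 //.
have := irr_q.1; have : (0 < size f1)%N by rewrite size_poly_gt0.
have : (0 < size (q ^+ r))%N by rewrite size_poly_gt0 expf_neq0.
move: (size f1) (size q) (size (q ^+ r)) => a b c; lia.
Qed.

Lemma local_minpoly_size_exists k : (k < size (mxminpoly A))%N ->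
  exists v f, local_minpoly v f /\ (k < size f)%N.
Proof.
elim: k => [|k IH] hk.
  have [f vf] := local_minpoly_exists 0; exists 0, f; split => //.
  by rewrite size_poly_gt0 (local_minpoly_neq0 vf).
have [v [f [vf kf]]] := IH (ltnW hk).
have [kf1 | sfk] := ltnP k.+1 (size f); first by exists v, f.
have Af : horner_mx A f != 0.
  apply: contraTneq hk => /mxminpoly_min /(dvdp_leq (local_minpoly_neq0 vf)) mf.
  by rewrite -leqNgt (leq_trans mf sfk).
have /existsP [i Af_i] : [exists i, row i (horner_mx A f) != 0].
  apply: contraNT Af; rewrite negb_exists => /forallP no_row.
  by apply/eqP/row_matrixP => i; rewrite row0; apply/eqP/negbNE/no_row.
have wf : mxact (delta_mx 0 i : 'rV_n.+1) f != 0 by rewrite -rowE.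
have [z [g [zg fg]]] := local_minpoly_grow vf wf.
by exists z, g; split => //; apply: leq_ltn_trans kf fg.
Qed.

Definition krylovmx v : 'M_n.+1 := \matrix_(i < n.+1) (v *m A ^+ i).

Lemma krylovmx_unit v f : local_minpoly v f -> (n.+1 < size f)%N -> krylovmx v \in unitmx.
Proof.
move=> vf sf; rewrite -row_free_unit -kermx_eq0; apply/rowV0P => c /sub_kermxP cK.
pose p := \poly_(i < n.+1) c 0 (inord i).
have cKp : c *m krylovmx v = mxact v p.
  rewrite mulmx_sum_row /p poly_def linear_sum mulmx_sumr; apply: eq_bigr => i _.
  by rewrite rowK linearZ /= rmorphXn /= horner_mx_X inord_val scalemxAr.
have p0 : p = 0.
  apply: contraTeq (size_poly n.+1 (fun i => c 0 (inord i))) => p0.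
  by rewrite -ltnNge (leq_trans sf) // dvdp_leq // -vf -cKp cK.
apply/rowP => j; rewrite mxE.
by have := congr1 (fun q : {poly F} => q`_j) p0; rewrite coef_poly ltn_ord inord_val coef0.
Qed.

Lemma krylovmx_unit_exists : mxminpoly A = char_poly A -> exists v, krylovmx v \in unitmx.
Proof.
move=> mA; have [|v [f [vf sf]]] := @local_minpoly_size_exists n.+1.
  by rewrite mA size_char_poly.
by exists v; apply: krylovmx_unit vf sf.
Qed.

End CyclicVector.

Section Annihilators.
Variables (F : fieldType) (n : nat).
Implicit Types (D N P : 'M[F]_n.+1) (rs : seq F).

Lemma mxminpoly_dvd_prod_XsubC D rs : \prod_(r <- rs) (D - r%:M) = 0 ->
  mxminpoly D %| \prod_(r <- rs) ('X - r%:P).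
Proof.
move=> D0; apply: mxminpoly_min; rewrite rmorph_prod -[RHS]D0.
by apply: eq_bigr => r _; rewrite rmorphB /= horner_mx_X horner_mx_C.
Qed.

Lemma eigenvalue_annihilated D rs : \prod_(r <- rs) (D - r%:M) = 0 ->
  forall x, eigenvalue D x -> x \in rs.
Proof.
move=> /mxminpoly_dvd_prod_XsubC D0 x.
by rewrite eigenvalue_root_min => /(root_dvdp D0); rewrite root_prod_XsubC.
Qed.

Lemma conjmx_nilp_diag_split P N D rs : P \in unitmx -> N *m N = 0 ->
  uniq rs -> \prod_(r <- rs) (D - r%:M) = 0 ->
  [/\ conjmx P (N + D) = conjmx P N + conjmx P D,
      conjmx P N *m conjmx P N = 0,
      diagonalizable (conjmx P D) & eigenvalue (conjmx P D) =1 eigenvalue D].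
Proof.
move=> Pu NN rs_uniq D0; split.
- by rewrite /conjmx mulmxDr mulmxDl.
- by rewrite conjumx // !mulmxA mulmxKV // -(mulmxA P) NN mulmx0 mul0mx.
- apply/diagonalizableP; exists rs; rewrite // mxminpoly_uconj //.
  exact: mxminpoly_dvd_prod_XsubC.
- by move=> x; rewrite !eigenvalue_root_min mxminpoly_uconj.
Qed.

End Annihilators.

Section Companion4.
Variable F : fieldType.

Definition mx4 (l : seq (seq F)) : 'M[F]_4 := \matrix_(i, j) nth 0 (nth [::] l i) j.

Lemma mulmx4E m n (A : 'M[F]_(m, 4)) (B : 'M[F]_(4, n)) i j :
  (A *m B) i j = A i 0 * B 0 j + A i 1 * B 1 j + A i 2%:R * B 2%:R j + A i 3%:R * B 3%:R j.
Proof.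
rewrite mxE !big_ord_recr big_ord0 /= add0r.
by congr (_ + _ + _ + _); congr (A _ _ * B _ _); apply/val_inj.
Qed.

Definition companion4 (b0 b1 b2 b3 : F) :=
  mx4 [:: [:: 0; 1; 0; 0]; [:: 0; 0; 1; 0]; [:: 0; 0; 0; 1]; [:: b0; b1; b2; b3]].

End Companion4.

Ltac mx4_entrywise := apply/matrixP => -[[|[|[|[|?]]]] ?] [[|[|[|[|?]]]] ?] //;
  rewrite ?mulmx4E !mxE /=.

Section TraceSplitting.
Variables (F : fieldType) (a b0 b1 b2 b3 : F).

Definition tr_nilp := mx4 [:: [:: 0; 0; 0; 0]; [:: 0; a; 1; 0]; [:: 0; -a^+2; -a; 0];
   [:: b0; a * b2 - a^+2 * b3; b2 - a * b3; 0]].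
Definition tr_diag := mx4 [:: [:: 0; 1; 0; 0]; [:: 0; -a; 0; 0]; [:: 0; a^+2; a; 1];
   [:: 0; b1 - a * b2 + a^+2 * b3; a * b3; b3]].

Lemma companion4_tr_split : companion4 b0 b1 b2 b3 = tr_nilp + tr_diag.
Proof. by mx4_entrywise; ring. Qed.

Lemma tr_nilp_sqr : tr_nilp *m tr_nilp = 0.
Proof. by mx4_entrywise; ring. Qed.

Lemma tr_diag_annihilated : \prod_(r <- [:: 0; -a; b3 + a]) (tr_diag - r%:M) = 0.
Proof.
(* The first two factors multiply to a rank-one matrix with rows 0, 0, w, b3 w,
   and w is a left eigenvector of tr_diag for the eigenvalue b3 + a. *)
pose c := b1 - a * b2 + a^+2 * b3.
pose w := [:: 0; a^+3 + c; 2%:R * a^+2 + a * b3; 2%:R * a + b3].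
rewrite !big_cons big_nil mulr1 mulrA -!mulmxE.
have -> : (tr_diag - 0%:M) *m (tr_diag - (- a)%:M) =
    mx4 [:: nseq 4 0; nseq 4 0; w; map ( *%R b3) w].
  by mx4_entrywise; rewrite /c; ring.
by mx4_entrywise; rewrite /c; ring.
Qed.

End TraceSplitting.

Section TracelessSplitting.
Variables (F : fieldType) (a b0 b1 b2 : F).
Local Notation y := (1 + a + a^+2 - b2).
Local Notation g := (- (a + a^+2)).

Definition tr0_nilp := mx4 [:: nseq 4 0; nseq 4 0; [:: 0; - y; 0; 0]; [:: b0; b1 - g; 0; 0]].
Definition tr0_diag :=
  mx4 [:: [:: 0; 1; 0; 0]; [:: 0; 0; 1; 0]; [:: 0; y; 0; 1]; [:: 0; g; b2; 0]].

Lemma companion4_tr0_split : companion4 b0 b1 b2 0 = tr0_nilp + tr0_diag.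
Proof. by mx4_entrywise; ring. Qed.

Lemma tr0_nilp_sqr : tr0_nilp *m tr0_nilp = 0.
Proof. by mx4_entrywise; ring. Qed.

Lemma tr0_diag_annihilated : \prod_(r <- [:: 0; 1; a; - (1 + a)]) (tr0_diag - r%:M) = 0.
Proof.
pose s := a + a^+2.
rewrite !big_cons big_nil mulr1 mulrA -!mulmxE.
have -> : (tr0_diag - 0%:M) *m (tr0_diag - 1%:M) = mx4 [:: [:: 0; -1; 1; 0]; [:: 0; y; -1; 1];
    [:: 0; g - y; y + b2; -1]; [:: 0; b2 * y - g; g - b2; b2]].
  by mx4_entrywise; ring.
have -> : (tr0_diag - a%:M) *m (tr0_diag - (- (1 + a))%:M) = mx4 [:: [:: - s; 1; 1; 0];
    [:: 0; y - s; 1; 1]; [:: 0; g + y; y + b2 - s; 1]; [:: 0; b2 * y + g; g + b2; b2 - s]].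
  by mx4_entrywise; rewrite /s; ring.
by mx4_entrywise; rewrite /s; ring.
Qed.

Lemma eigenvalue_tr0_diag x : eigenvalue tr0_diag x = (x \in [:: 0; 1; a; - (1 + a)]).
Proof.
apply/idP/idP; first exact: eigenvalue_annihilated tr0_diag_annihilated x.
move=> x_root; apply/eigenvalueP.
exists (\row_j nth 0 [:: x^+3 - (1 + a + a^+2) * x + a + a^+2; x^+2 - b2; x; 1] j); last first.
  by apply/eqP => /rowP /(_ 3%:R); rewrite !mxE /= => /eqP; rewrite oner_eq0.
apply/rowP => -[[|[|[|[|?]]]] ?] //; rewrite mulmx4E !mxE /=; try ring.
by move: x_root; rewrite !inE => /or4P [] /eqP ->; ring.
Qed.

End TracelessSplitting.

Section CompanionForm.
Variable F : fieldType.

Lemma mxtrace_companion4 (b0 b1 b2 b3 : F) : \tr (companion4 b0 b1 b2 b3) = b3.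
Proof. by rewrite /mxtrace !big_ord_recr big_ord0 /= !mxE /= !add0r. Qed.

Lemma krylovmx_companion4 (B : 'M[F]_4) v : krylovmx B v \in unitmx ->
  exists b0 b1 b2 b3, krylovmx B v *m B = companion4 b0 b1 b2 b3 *m krylovmx B v.
Proof.
set K := krylovmx B v => Ku; set b := v *m B ^+ 4 *m invmx K.
exists (b 0 0), (b 0 1), (b 0 2%:R), (b 0 3%:R).
have rowK i : row i K = v *m B ^+ i by rewrite rowK.
have powS k : B ^+ k *m B = B ^+ k.+1 by rewrite exprSr.
apply/row_matrixP => i; rewrite !row_mul rowK -mulmxA powS.
case: i => [[|[|[|[|i]]]] Hi] //.
1-3: rewrite [RHS]mulmx_sum_row !big_ord_recr big_ord0 /= !rowK !mxE /=;
  by rewrite !scale0r scale1r ?add0r ?addr0.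
suff -> : row (Ordinal Hi) (companion4 (b 0 0) (b 0 1) (b 0 2%:R) (b 0 3%:R)) = b.
  by rewrite mulmxKV.
apply/rowP => -[[|[|[|[|j]]]] Hj] //; rewrite [LHS]mxE [LHS]mxE /=.
all: by congr (b 0 _); apply/val_inj.
Qed.

Lemma non_derogative_companion4 (B : 'M[F]_4) : non_derogative B ->
  exists K b0 b1 b2 b3, K \in unitmx /\ B = conjmx (invmx K) (companion4 b0 b1 b2 b3).
Proof.
move=> /krylovmx_unit_exists [v Ku]; have [b0 [b1 [b2 [b3 KB]]]] := krylovmx_companion4 Ku.
by exists (krylovmx B v), b0, b1, b2, b3; rewrite conjVmx // -mulmxA -KB mulKmx.
Qed.

End CompanionForm.

Section CharacteristicTwo.
Variable F : fieldType.
Hypothesis hchar : 2%N \in [pchar F].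

Lemma eq_addr_self (x y : F) : (x == x + y) = (y == 0).
Proof. by rewrite -subr_eq0 opprD addrA subrr add0r oppr_eq0. Qed.

Lemma addr_eq0_pchar2 (x y : F) : (x + y == 0) = (x == y).
Proof. by rewrite addr_eq0 oppr_pchar2. Qed.

Lemma uniq_tr_roots (a t : F) : a != 0 -> a != t -> t != 0 -> uniq [:: 0; - a; t + a].
Proof.
move=> a0 at_ t0; rewrite oppr_pchar2 //= !inE negb_or !(eq_sym 0) addr_eq0_pchar2.
by rewrite (addrC t) eq_addr_self (eq_sym t) a0 at_ t0.
Qed.

Lemma uniq_tr0_roots (a : F) : a != 0 -> a != 1 -> uniq [:: 0; 1; a; - (1 + a)].
Proof.
move=> a0 a1; rewrite oppr_pchar2 //= !inE !negb_or !(eq_sym 0) oner_eq0.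
by rewrite addr_eq0_pchar2 eq_addr_self (addrC 1) eq_addr_self oner_eq0 !(eq_sym 1) a0 a1.
Qed.

End CharacteristicTwo.

Theorem proposition2p5 (F : fieldType)
  (hchar : 2%N \in [pchar F])
  (hcard : exists s : seq F, uniq s /\ (4 <= size s)%N)
  (B : 'M[F]_4) (hB : non_derogative B) :
  (\tr B != 0 ->
     forall a : F, a != 0 -> a != \tr B ->
       exists N D : 'M[F]_4,
         [/\ B = N + D, N *m N = 0, diagonalizable D &
             forall x : F, eigenvalue D x -> x \in [:: 0; a; \tr B + a]])
  /\
  (\tr B = 0 ->
     forall a : F, a != 0 -> a != 1 ->
       exists N D : 'M[F]_4,
         [/\ B = N + D, N *m N = 0, diagonalizable D &
             forall x : F, eigenvalue D x <-> x \in [:: 0; 1; a; a + 1]]).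
Proof.
have [K [b0 [b1 [b2 [b3 [Ku ->]]]]]] := non_derogative_companion4 hB.
have -> : \tr (conjmx (invmx K) (companion4 b0 b1 b2 b3)) = b3.
  by rewrite conjVmx // mxtrace_mulC mulmxA mulmxV // mul1mx mxtrace_companion4.
have Ku' : invmx K \in unitmx by rewrite unitmx_inv.
have opp2 := oppr_pchar2 hchar.
split=> [b3_0 a a0 a_b3 | -> a a0 a1].
  have [split_C NN diagD eigD] := conjmx_nilp_diag_split Ku' (tr_nilp_sqr a b0 b2 b3)
    (uniq_tr_roots hchar a0 a_b3 b3_0) (tr_diag_annihilated a b1 b2 b3).
  exists (conjmx (invmx K) (tr_nilp a b0 b2 b3)), (conjmx (invmx K) (tr_diag a b1 b2 b3)).
  split=> // [|x]; first by rewrite (companion4_tr_split a) split_C.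
  by rewrite eigD => /(eigenvalue_annihilated (tr_diag_annihilated a b1 b2 b3)); rewrite opp2.
have [split_C NN diagD eigD] := conjmx_nilp_diag_split Ku' (tr0_nilp_sqr a b0 b1 b2)
  (uniq_tr0_roots hchar a0 a1) (tr0_diag_annihilated a b2).
exists (conjmx (invmx K) (tr0_nilp a b0 b1 b2)), (conjmx (invmx K) (tr0_diag a b2)).
split=> // [|x]; first by rewrite (companion4_tr0_split a) split_C.
by rewrite eigD eigenvalue_tr0_diag opp2 (addrC 1).
Qed.
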